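(* Let $\mathcal G$ be a grid, $\delta<c(\mathcal G)/2$, and $\vec a,\vec b\in\mathbb{R}^n$ with $\inf_{\vec g\in\mathrm{Grid}_{\mathcal G}}\|\vec a-\vec g\|_\infty\le\delta$ and $\vec b\ge\vec a$. If $\mathrm{push}_{\mathcal L}(\vec a)=\mathrm{push}_{\mathcal L}(\vec b)$ for $\mathcal L=\mathcal L_{\mathsf U^{\mathcal G}_\delta\mathsf M^{\mathcal G}_\delta(\vec a)}$, then $\mathsf M^{\mathcal G}_\delta(\vec a)=\mathsf M^{\mathcal G}_\delta(\vec b)$.
   Context: A grid is $\mathcal G=\prod_i\mathcal G^i$, $\mathcal G^i:[k_i]\to\mathbb{R}$; $\mathrm{Grid}_{\mathcal G}=\{\vec x:x_j\in\mathrm{Im}\,\mathcal G^j\text{ for some }j\}$; $c(\mathcal G)=\min\{\|\vec x-\vec y\|_\infty:\vec x\ne\vec y\in\mathrm{Im}\,\mathcal G\}$. The merge function $\mathsf M^{\mathcal G}_\delta$ acts coordinatewise: $x_i\mapsto\mathcal G^i(k)$ if $x_i\in[\mathcal G^i(k)-\delta,\mathcal G^i(k)+\delta]$, else $x_i\mapsto x_i$. The unmerge function on $\mathrm{Grid}_{\mathcal G}$: for $\vec x\in\mathrm{Grid}_{\mathcal G}$ let $\mathcal I_{\vec x}=\{i:\inf_k|x_i-\mathcal G^i(k)|\le\delta\}$ and $\mathsf U^{\mathcal G}_\delta(\vec x)=\mathsf M^{\mathcal G}_\delta(\vec x)+\delta\sum_{i\in\mathcal I_{\vec x}}\vec e_i$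 ($\vec e_i$ standard basis vectors). For $\vec p\in\mathbb{R}^n$, $\mathcal L_{\vec p}=\{\vec p+t\vec1\}$, and $\mathrm{push}_{\mathcal L}(\vec q)=\min\{\vec y\in\mathcal L:\vec y\ge\vec q\}$. *)

From mathcomp Require Import all_boot all_order all_algebra.
From mathcomp Require Import reals.
Unset Printing Implicit Defensive.
Import Order.TTheory GRing.Theory Num.Theory.
Local Open Scope ring_scope.

Section Grids.
Variables (R : realType) (n : nat).

(* A grid G = prod_i G^i with G^i : [k_i] -> R, encoded by k : 'I_n -> nat and
   G i : 'I_(k i) -> R. *)
Definition grid (k : 'I_n -> nat) := forall i : 'I_n, 'I_(k i) -> R.

Definition supnorm (x : 'rV[R]_n) : R := \big[Num.max/0]_(i < n) `|x 0 i|.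

Definition vle (x y : 'rV[R]_n) : Prop := forall i, x 0 i <= y 0 i.

Variable (k : 'I_n -> nat).
Variable G : forall i : 'I_n, 'I_(k i) -> R.

Definition in_ImG (x : 'rV[R]_n) : Prop := forall i, exists j, x 0 i = G i j.
Definition in_GridG (x : 'rV[R]_n) : Prop := exists i, exists j, x 0 i = G i j.

(* delta < c(G)/2, where c(G) = min { ||x - y||_oo : x <> y in Im G } *)
Definition delta_lt_half_c (delta : R) : Prop :=
  forall x y, in_ImG x -> in_ImG y -> x <> y -> delta < supnorm (x - y) / 2.

Definition mergeG (delta : R) (x : 'rV[R]_n) : 'rV[R]_n :=
  \row_i (match [pick j | `|x 0 i - G i j| <= delta] with
          | Some j => G i j
          | None => x 0 i
          end).

Definition unmergeG (delta : R) (x : 'rV[R]_n) : 'rV[R]_n :=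
  mergeG delta x +
  \sum_(i < n | [exists j, `|x 0 i - G i j| <= delta]) delta *: delta_mx 0 i.

End Grids.

Arguments mergeG {R n k} G delta x.
Arguments grid {R n} k.
Arguments supnorm {R n} x.
Arguments vle {R n} x y.
Arguments in_ImG {R n k} G x.
Arguments unmergeG {R n k} G delta x.
Arguments in_GridG {R n k} G x.
Arguments delta_lt_half_c {R n k} G delta.

Definition on_line (R : realType) (n : nat) (p y : 'rV[R]_n) : Prop :=
  exists t : R, y = p + t *: const_mx 1.

Arguments on_line {R n} p y.

Definition is_push (R : realType) (n : nat) (p q y : 'rV[R]_n) : Prop :=
  [/\ on_line p y, vle q y &
      forall z, on_line p z -> vle q z -> vle y z].

Arguments is_push {R n} p q y.

From mathcomp Require Import all_boot all_order all_algebra.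
From mathcomp Require Import reals.
From mathcomp Require Import lra.
Import Order.TTheory GRing.Theory Num.Theory.
Local Open Scope ring_scope.

(* The argument is coordinatewise. Since [delta < c(G)/2], every real is within
   [delta] of at most one grid value per coordinate, so [p := U(M(a))] has
   [p_i = g + delta] when [a_i] merges to the grid value [g], and [p_i = a_i]
   otherwise. The point [p] lies on its own line and dominates [a], so the common
   push [y] satisfies [b <= y <= p]; hence [a_i <= b_i <= p_i], which forces [b_i]
   to merge exactly as [a_i] does. *)

Lemma is_push_le_base {R : realType} {n : nat} {p q y : 'rV[R]_n} :
  vle q p -> is_push p q y -> vle y p.
Proof.
by move=> qp [_ _ least]; apply: least qp; exists 0; rewrite scale0r addr0.
Qed.

Section Merge.
Context {R : realType} {n : nat} {k : 'I_n -> nat} {G : @grid R n k} {delta : R}.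

Let near (x : R) (i : 'I_n) := [exists j, `|x - G i j| <= delta].

Lemma mergeG_far {x : 'rV[R]_n} {i} : ~~ near (x 0 i) i -> mergeG G delta x 0 i = x 0 i.
Proof.
move=> /existsPn far; rewrite mxE.
by case: pickP => [j hj|//]; have := far j; rewrite hj.
Qed.

Lemma unmergeGE (x : 'rV[R]_n) i :
  unmergeG G delta x 0 i = mergeG G delta x 0 i + (if near (x 0 i) i then delta else 0).
Proof.
rewrite /unmergeG mxE summxE big_mkcond (bigD1 i) //= big1 ?addr0.
  by rewrite !mxE !eqxx mulr1.
move=> l /negbTE hl; case: ifP => // _.
by rewrite !mxE eq_sym hl andbF mulr0.
Qed.

Hypotheses (k_gt0 : forall i, (0 < k i)%N) (delta_small : delta_lt_half_c G delta).

Lemma twice_delta_lt_grid_gap {i} {j j' : 'I_(k i)} :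
  G i j != G i j' -> delta *+ 2 < `|G i j - G i j'|.
Proof.
move=> neq.
pose base : 'rV[R]_n := \row_l G l (Ordinal (k_gt0 l)).
pose X (g : R) : 'rV[R]_n := \row_l (if l == i then g else base 0 l).
have onX (j0 : 'I_(k i)) : in_ImG G (X (G i j0)).
  move=> l; rewrite !mxE; have [->|_] := eqVneq l i; first by exists j0.
  by exists (Ordinal (k_gt0 l)).
have neqX : X (G i j) <> X (G i j').
  by move/(congr1 (fun M : 'rV[R]_n => M 0 i)); rewrite !mxE eqxx; apply/eqP.
have normX : supnorm (X (G i j) - X (G i j')) <= `|G i j - G i j'|.
  apply: (big_ind (fun v => v <= _)) => [||l _]; first exact: normr_ge0.
    by move=> u v hu hv; rewrite ge_max hu hv.
  rewrite !mxE; case: eqP => _ //.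
  by rewrite subrr normr0 normr_ge0.
have := delta_small _ _ (onX j) (onX j') neqX; lra.
Qed.

Lemma grid_near_uniq {i} {j j' : 'I_(k i)} {x : R} :
  `|x - G i j| <= delta -> `|x - G i j'| <= delta -> G i j = G i j'.
Proof.
move=> hj hj'; have [//|/twice_delta_lt_grid_gap gap] := eqVneq (G i j) (G i j'); exfalso.
have := ler_distD x (G i j) (G i j'); rewrite (distrC _ x); lra.
Qed.

Lemma mergeG_near {x : 'rV[R]_n} {i j} :
  `|x 0 i - G i j| <= delta -> mergeG G delta x 0 i = G i j.
Proof.
move=> hj; rewrite mxE; case: pickP => [j' hj'|no]; last by have := no j; rewrite hj.
exact: grid_near_uniq hj' hj.
Qed.

Lemma unmergeG_mergeG_near {a : 'rV[R]_n} {i j} :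
  `|a 0 i - G i j| <= delta -> unmergeG G delta (mergeG G delta a) 0 i = G i j + delta.
Proof.
move=> hj; have delta_ge0 : 0 <= delta by apply: le_trans hj.
have self : `|mergeG G delta a 0 i - G i j| <= delta by rewrite (mergeG_near hj) subrr normr0.
have near_self : near (mergeG G delta a 0 i) i by apply/existsP; exists j.
by rewrite unmergeGE near_self (mergeG_near self).
Qed.

Lemma unmergeG_mergeG_far {a : 'rV[R]_n} {i} :
  ~~ near (a 0 i) i -> unmergeG G delta (mergeG G delta a) 0 i = a 0 i.
Proof.
move=> far; have far_merged : ~~ near (mergeG G delta a 0 i) i by rewrite mergeG_far.
by rewrite unmergeGE (negbTE far_merged) addr0 !mergeG_far.
Qed.

Lemma le_unmergeG_mergeG (a : 'rV[R]_n) : vle a (unmergeG G delta (mergeG G delta a)).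
Proof.
move=> i; case: (boolP (near (a 0 i) i)) => [/existsP[j hj]|far].
  by rewrite (unmergeG_mergeG_near hj); move: hj; rewrite ler_norml; lra.
by rewrite unmergeG_mergeG_far.
Qed.

Lemma mergeG_eq_below_unmergeG (a b : 'rV[R]_n) i :
  a 0 i <= b 0 i -> b 0 i <= unmergeG G delta (mergeG G delta a) 0 i ->
  mergeG G delta a 0 i = mergeG G delta b 0 i.
Proof.
case: (boolP (near (a 0 i) i)) => [/existsP[j hj]|far] ab.
  rewrite (unmergeG_mergeG_near hj) (mergeG_near hj) => bp.
  by rewrite (@mergeG_near b i j) //; move: hj; rewrite !ler_norml; lra.
rewrite unmergeG_mergeG_far // => ba.
have ba_eq : b 0 i = a 0 i by apply/eqP; rewrite eq_le ba ab.
by rewrite (mergeG_far far) mergeG_far ba_eq.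
Qed.

Lemma mergeG_eq_of_common_push {a b y : 'rV[R]_n} :
  vle a b ->
  is_push (unmergeG G delta (mergeG G delta a)) a y ->
  is_push (unmergeG G delta (mergeG G delta a)) b y ->
  mergeG G delta a = mergeG G delta b.
Proof.
move=> ab push_a [_ b_le_y _].
have y_le_p := is_push_le_base (le_unmergeG_mergeG a) push_a.
apply/rowP => i; apply: mergeG_eq_below_unmergeG (ab i) _.
exact: le_trans (b_le_y i) (y_le_p i).
Qed.

End Merge.

Theorem mainTheorem17 (R : realType) (n : nat) (k : 'I_n -> nat) (G : @grid R n k)
    (delta : R) (a b : 'rV[R]_n) :
  (forall i, (0 < k i)%N) ->
  delta_lt_half_c G delta ->
  (forall eps : R, 0 < eps ->
     exists g, in_GridG G g /\ supnorm (a - g) <= delta + eps) ->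
  vle a b ->
  (exists y, is_push (unmergeG G delta (mergeG G delta a)) a y /\
             is_push (unmergeG G delta (mergeG G delta a)) b y) ->
  mergeG G delta a = mergeG G delta b.
Proof.
move=> k_gt0 delta_small _ ab [y [push_a push_b]].
exact: (mergeG_eq_of_common_push k_gt0 delta_small ab push_a push_b).
Qed.
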